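(* Let $\mathcal{X}$ be an input space, $\mathcal{Y}$ an output space, and $d_{\mathcal{X}}:\mathcal{X}\times\mathcal{X}\to\mathbb{R}_{\ge 0}$ a distance function. Define $d$ on $\mathcal{X}\times\mathcal{Y}$ by $d((x_1,y_1),(x_2,y_2)) = d_{\mathcal{X}}(x_1,x_2)$ if $y_1=y_2$ and $d((x_1,y_1),(x_2,y_2))=\infty$ otherwise. Let $\mathcal{D}$ and $\tilde{\mathcal{D}}$ be probability distributions on $\mathcal{X}\times\mathcal{Y}$ such that $W_1^{d}(\mathcal{D},\tilde{\mathcal{D}})\le \epsilon$ for a real number $\epsilon\ge 0$, in the sense that there exists a coupling $\gamma^*$ of $\mathcal{D}$ and $\tilde{\mathcal{D}}$ (a joint distribution on $(\mathcal{X}\times\mathcal{Y})^2$ with marginals $\mathcal{D}$ and $\tilde{\mathcal{D}}$) with $\mathbb{E}_{(\tau_1,\tau_2)\sim\gamma^*}[d(\tau_1,\tau_2)]\le\epsilon$. Let $\mathcal{S}:\mathcal{X}\to\Delta(\mathcal{X})$ assign to each $x\in\mathcal{X}$ a probability distribution $\mathcal{S}(x)$ on $\mathcal{X}$, and let $\psi:\mathbb{R}_{\ge0}\to\mathbb{R}$ be a concave non-decreasing function such that $\mathrm{TV}(\mathcal{S}(x_1),\mathcal{S}(x_2))\le \psi(d_{\mathcal{X}}(x_1,x_2))$ for all $x_1,x_2\in\mathcal{X}$. Given a function $h:\mathcal{X}\times\mathcal{Y}\to[0,1]$, define its smoothed version $\bar h(x,y)=\mathbb{E}_{x'\sim\mathcal{S}(x)}[h(x',y)]$.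 Then \[\left|\mathbb{E}_{(x_1,y_1)\sim\mathcal{D}}[\bar h(x_1,y_1)] - \mathbb{E}_{(x_2,y_2)\sim\tilde{\mathcal{D}}}[\bar h(x_2,y_2)]\right|\le \psi(\epsilon).\]
   Context: $\mathrm{TV}$ denotes total variation distance between probability distributions, $\mathrm{TV}(\mu_1,\mu_2)=\tfrac12\int|\mu_1-\mu_2|$. $\Delta(\mathcal{X})$ denotes the set of probability distributions over $\mathcal{X}$. $W_1^d$ is the 1-Wasserstein distance with respect to the cost $d$. *)

From HB Require Import structures.
From mathcomp Require Import all_boot all_order all_algebra.
From mathcomp Require Import all_classical all_reals all_analysis.
Set Implicit Arguments. Unset Strict Implicit. Unset Printing Implicit Defensive.
Import Order.TTheory GRing.Theory Num.Theory.
Local Open Scope classical_set_scope.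
Local Open Scope ring_scope.
Local Open Scope ereal_scope.

(* Total variation distance between two measures on T:
   TV(mu1,mu2) = sup_{A measurable} |mu1 A - mu2 A|
   (for probability measures this equals 1/2 int |mu1 - mu2|). *)
Definition TV {d} {T : measurableType d} {R : realType}
  (mu1 mu2 : set T -> \bar R) : \bar R :=
  ereal_sup [set `|mu1 A - mu2 A| | A in [set A | measurable A]].

Definition label_cost {X Y : Type} {R : realType} (dX : X -> X -> R)
  (t1 t2 : X * Y) : \bar R :=
  if `[< t1.2 = t2.2 >] then (dX t1.1 t2.1)%:E else +oo.

Definition smoothed {dx} {X : measurableType dx} {Y : Type} {R : realType}
  (S : X -> {measure set X -> \bar R}) (h : X * Y -> R) (p : X * Y) : \bar R :=
  \int[S p.1]_x' (h (x', p.2))%:E.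

From HB Require Import structures.
From mathcomp Require Import all_boot all_order all_algebra.
From mathcomp Require Import all_classical all_reals all_analysis.
From mathcomp Require Import ring lra measurable_realfun.
Import Order.TTheory GRing.Theory Num.Theory.
Local Open Scope classical_set_scope.
Local Open Scope ring_scope.
Local Open Scope ereal_scope.

(* Integrals of a [0, 1]-valued function against two probabilities differ by
   at most their total variation distance, so
   |hbar(x1, y) - hbar(x2, y)| <= TV(S x1, S x2) <= psi(d_X(x1, x2)).  The
   coupling gamma has finite cost, hence equal labels, gamma-almost everywhere;
   integrating against gamma bounds the difference of the two expectations by
   E_gamma psi(d(t1, t2)), and concavity bounds this by psi(E_gamma d) <= psi eps:
   for eps > 0 through a supergradient c >= 0 of psi at eps, and for eps = 0
   because the cost then vanishes almost everywhere. *)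

Section concave_supergradient.
Context {R : realType} {psi : R -> R}.
Local Open Scope ring_scope.
Hypothesis psi_concave : forall a b t : R, 0 <= a -> 0 <= b -> 0 <= t <= 1 ->
  t * psi a + (1 - t) * psi b <= psi (t * a + (1 - t) * b).

Lemma concave_slope_le b e a : 0 <= b -> b < e -> e < a ->
  (psi a - psi e) / (a - e) <= (psi e - psi b) / (e - b).
Proof.
move=> b0 be ea.
pose t := (a - e) / (a - b).
have t01 : 0 <= t <= 1.
  by apply/andP; split; [rewrite divr_ge0 //; lra | rewrite ler_pdivrMr; lra].
have a0 : 0 <= a by lra.
have := @psi_concave b a t b0 a0 t01.
rewrite (_ : t * b + _ = e); last by rewrite /t; field; lra.
have -> : t * psi b + (1 - t) * psi a =
    ((a - e) * psi b + (e - b) * psi a) / (a - b) by rewrite /t; field; lra.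
rewrite ler_pdivrMr; last lra.
rewrite ler_pdivrMr; last lra.
rewrite mulrAC ler_pdivlMr; last lra.
nra.
Qed.

Hypothesis psi_ndecr : forall a b : R, 0 <= a -> a <= b -> psi a <= psi b.

Lemma concave_supergradient e : 0 < e ->
  exists2 c, 0 <= c & forall a, 0 <= a -> psi a <= psi e + c * (a - e).
Proof.
move=> e0.
pose slopes := [set (psi a - psi e) / (a - e) | a in [set a | e < a]].
have slope1 : slopes ((psi (e + 1) - psi e) / (e + 1 - e)).
  by exists (e + 1) => //=; lra.
have slopes_ub : ubound slopes ((psi e - psi 0) / (e - 0)).
  by move=> _ [a /= ea <-]; apply: concave_slope_le.
have slopes_sup : has_sup slopes.
  by split; [exact: ex_intro _ _ slope1 | exact: ex_intro _ _ slopes_ub].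
exists (sup slopes).
  apply: le_trans (sup_upper_bound slopes_sup slope1).
  by rewrite divr_ge0 ?subr_ge0 ?psi_ndecr //; lra.
move=> a a0; have [ae|ea|->] := ltgtP a e; last by rewrite subrr mulr0 addr0.
- have : sup slopes <= (psi e - psi a) / (e - a).
    apply: ge_sup => [|_ [a' /= ea' <-]]; first exact: slopes_sup.1.
    exact: concave_slope_le.
  rewrite ler_pdivlMr; last lra.
  nra.
- have : (psi a - psi e) / (a - e) <= sup slopes.
    by apply: sup_upper_bound => //; exists a.
  rewrite ler_pdivrMr; last lra.
  nra.
Qed.

End concave_supergradient.

Section unit_interval_integral.
Context {d} {T : measurableType d} {R : realType}.
Context (mu : probability T R) {f : T -> \bar R}.
Hypotheses (mf : measurable_fun setT f) (f01 : forall x, 0 <= f x <= 1).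

Let f_ge0 x : 0 <= f x. Proof. by case/andP: (f01 x). Qed.

Lemma integral_itv01 : 0 <= \int[mu]_x f x <= 1.
Proof.
rewrite integral_ge0 //=; apply: le_trans (_ : \int[mu]_x cst 1 x <= 1).
  by apply: ge0_le_integral => // x _; case/andP: (f01 x).
by rewrite integral_cst // mul1e probability_le1.
Qed.

Lemma integrable_itv01 : mu.-integrable setT f.
Proof.
apply/integrableP; split => //; under eq_integral do rewrite gee0_abs //.
by case/andP: integral_itv01 => _ /le_lt_trans; apply; rewrite ltry.
Qed.

End unit_interval_integral.

Lemma abse_sub_le {R : realType} (a b e : \bar R) :
  a \is a fin_num -> b \is a fin_num -> a <= b + e -> b <= a + e -> `|a - b| <= e.
Proof.
move: a b e => [a| |] [b| |] [e| |] //= _ _; rewrite ?leey // !lee_fin => abe bae.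
by rewrite ler_norml; apply/andP; split; lra.
Qed.

Section total_variation.
Context {d} {T : measurableType d} {R : realType} (mu1 mu2 : probability T R).

Lemma TVC : TV mu1 mu2 = TV mu2 mu1.
Proof.
rewrite /TV; congr ereal_sup; apply/seteqP; split => _ [A mA <-]; exists A => //;
  by rewrite -(fineK (fin_num_measure mu1 _ mA)) -(fineK (fin_num_measure mu2 _ mA))
             -!EFinB !abse_EFin distrC.
Qed.

Variable f : T -> \bar R.
Hypotheses (mf : measurable_fun setT f) (f01 : forall x, 0 <= f x <= 1).

Lemma integral_le_TV : \int[mu1]_x f x <= \int[mu2]_x f x + TV mu1 mu2.
Proof.
have f_ge0 x : 0 <= f x by case/andP: (f01 x).
(* With nu = mu1 - mu2 = nu+ - nu-, we get mu1 + nu- = mu2 + nu+, and the mass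
   of nu+ is nu P for a positive set P, hence at most TV mu1 mu2. *)
pose nu := cadd (charge_of_finite_measure mu1) (copp (charge_of_finite_measure mu2)).
have [P [N nuPN]] := Hahn_decomposition nu.
have [[mP _] _ _ _] := nuPN.
pose pos := jordan_pos nuPN; pose neg := jordan_neg nuPN.
have mu1_neg A : measurable A -> mu1 A + neg A = mu2 A + pos A.
  move=> mA; have : mu1 A - mu2 A = pos A + (-1)%:E * neg A := jordan_decomp nuPN mA.
  rewrite -(fineK (fin_num_measure mu1 _ mA)) -(fineK (fin_num_measure mu2 _ mA)).
  have pos_fin : pos A \is a fin_num := fin_num_measure _ _ mA.
  have neg_fin : neg A \is a fin_num := fin_num_measure _ _ mA.
  rewrite -(fineK pos_fin) -(fineK neg_fin).
  by rewrite -EFinM -EFinB -!EFinD => -[?]; congr EFin; lra.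
have : \int[measure_add mu1 neg]_x f x = \int[measure_add mu2 pos]_x f x.
  apply: eq_measure_integral => A mA _.
  by rewrite /= /msum !big_ord_recl !big_ord0 /= !adde0 mu1_neg.
rewrite !ge0_integral_measure_add // => int_eq.
have pos_le_TV : \int[pos]_x f x <= TV mu1 mu2.
  apply: le_trans (_ : \int[pos]_x cst 1 x <= _).
    by apply: ge0_le_integral => // x _; case/andP: (f01 x).
  rewrite integral_cst // mul1e; change (crestr0 nu mP setT <= TV mu1 mu2).
  rewrite /crestr0 mem_set //= /crestr setTI; apply: le_trans (lee_abs _) _.
  by apply: ereal_sup_ubound; exists P.
apply: le_trans (_ : _ <= \int[mu1]_x f x + \int[neg]_x f x) _.
  by rewrite leeDl // integral_ge0.
by rewrite int_eq leeD2l.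
Qed.

End total_variation.

Lemma abse_integral_sub_le_TV {d} {T : measurableType d} {R : realType}
    (mu1 mu2 : probability T R) {f : T -> \bar R} :
  measurable_fun setT f -> (forall x, 0 <= f x <= 1) ->
  `|\int[mu1]_x f x - \int[mu2]_x f x| <= TV mu1 mu2.
Proof.
move=> mf f01.
have fin_int (mu : probability T R) : \int[mu]_x f x \is a fin_num.
  case/andP: (integral_itv01 mu mf f01) => int_ge0 int_le1.
  by rewrite ge0_fin_numE // (le_lt_trans int_le1) ?ltry.
apply: abse_sub_le; [exact: fin_int | exact: fin_int | exact: integral_le_TV |].
by rewrite TVC; exact: integral_le_TV.
Qed.

Section integral_ae_le.
Context {d} {T : measurableType d} {R : realType} (mu : {measure set T -> \bar R}).

Lemma ae_le_integral {D : set T} {f g : T -> \bar R} : measurable D ->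
  mu.-integrable D f -> mu.-integrable D g ->
  {ae mu, forall x, D x -> f x <= g x} ->
  \int[mu]_(x in D) f x <= \int[mu]_(x in D) g x.
Proof.
move=> mD intf intg [N [mN N0 fgN]].
rewrite (negligible_integral mN mD intf N0) (negligible_integral mN mD intg N0).
have mDN : measurable (D `\` N) by exact: measurableD.
apply: le_integral => //; [exact: integrableS mD mDN (@subDsetl _ _ _) intf|
  exact: integrableS mD mDN (@subDsetl _ _ _) intg|].
move=> x /set_mem[Dx Nx]; apply: contrapT => /negP; rewrite -ltNge => gf.
by apply: Nx; apply: fgN => /(_ Dx); rewrite leNgt gf.
Qed.

Lemma abse_integral_sub_le (u v f : T -> \bar R) :
  mu.-integrable setT u -> mu.-integrable setT v -> mu.-integrable setT f ->
  {ae mu, forall x, `|u x - v x| <= f x} ->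
  `|\int[mu]_x u x - \int[mu]_x v x| <= \int[mu]_x f x.
Proof.
move=> intu intv intf uvf; rewrite -integralB //.
have intuv := integrableB measurableT intu intv.
apply: le_trans (le_abse_integral _ measurableT (measurable_int _ intuv)) _.
apply: (ae_le_integral measurableT (integrable_abse intuv) intf).
by apply: filterS uvf => x uvx _.
Qed.

End integral_ae_le.

Section coupling_marginals.
Context {d1 d2} {T1 : measurableType d1} {T2 : measurableType d2} {R : realType}.
Context {gam : {measure set (T1 * T2) -> \bar R}}.

Lemma integral_coupling_fst {mu : {measure set T1 -> \bar R}} {f : T1 -> \bar R} :
  (forall A, measurable A -> gam (A `*` setT) = mu A) ->
  measurable_fun setT f -> (forall x, 0 <= f x) ->
  \int[mu]_x f x = \int[gam]_t f t.1.
Proof.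
move=> marg mf f0; transitivity (\int[pushforward gam fst]_x f x).
  apply: eq_measure_integral => A mA _; rewrite /pushforward -marg //.
  by congr (gam _); apply/seteqP; split => -[? ?] /=; [case|].
by rewrite ge0_integral_pushforward // preimage_setT.
Qed.

Lemma integral_coupling_snd {mu : {measure set T2 -> \bar R}} {f : T2 -> \bar R} :
  (forall A, measurable A -> gam (setT `*` A) = mu A) ->
  measurable_fun setT f -> (forall x, 0 <= f x) ->
  \int[mu]_x f x = \int[gam]_t f t.2.
Proof.
move=> marg mf f0; transitivity (\int[pushforward gam snd]_x f x).
  apply: eq_measure_integral => A mA _; rewrite /pushforward -marg //.
  by congr (gam _); apply/seteqP; split => -[? ?] /=; [case|].
by rewrite ge0_integral_pushforward // preimage_setT.
Qed.

End coupling_marginals.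

Section concave_majorant.
Context {d} {T : measurableType d} {R : realType} {mu : probability T R}.
Context {cost : T -> \bar R} {psi : R -> R} {eps : R}.
Hypotheses (mcost : measurable_fun setT cost) (cost_ge0 : forall x, 0 <= cost x).
Hypotheses (eps_ge0 : (0 <= eps)%R) (cost_le : \int[mu]_x cost x <= eps%:E).
Hypothesis psi_ndecr :
  forall a b : R, (0 <= a)%R -> (a <= b)%R -> (psi a <= psi b)%R.
Hypothesis psi_concave :
  forall a b t : R, (0 <= a)%R -> (0 <= b)%R -> (0 <= t <= 1)%R ->
  (t * psi a + (1 - t) * psi b <= psi (t * a + (1 - t) * b))%R.

Let mu_setT : (mu : {measure set T -> \bar R}) setT = 1.
Proof. exact: probability_setT. Qed.

Let integrable_cost : mu.-integrable setT cost.
Proof.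
apply/integrableP; split => //; under eq_integral do rewrite gee0_abs //.
by rewrite (le_lt_trans cost_le) ?ltry.
Qed.

Lemma concave_integral_majorant : exists f : T -> \bar R,
  [/\ mu.-integrable setT f, \int[mu]_x f x <= (psi eps)%:E &
      {ae mu, forall x, exists2 r, cost x = r%:E & (psi r)%:E <= f x}].
Proof.
(* At eps = 0, psi may have no supergradient (think of sqrt), but there the cost
   vanishes almost everywhere. *)
move: eps_ge0 cost_le; rewrite le_eqVlt => /orP[/eqP <- cost_le0|eps_gt0 _].
  exists (cst (psi 0)%:E); split.
  - exact: finite_measure_integrable_cst.
  - by rewrite integral_cst // mu_setT mule1.
  have /ae_eq_integral_abs cost0 : \int[mu]_x `|cost x| = 0.
    under eq_integral do rewrite gee0_abs //.
    by apply/eqP; rewrite eq_le cost_le0 integral_ge0.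
  by apply: filterS (cost0 measurableT mcost) => x /(_ I) ->; exists 0%R.
have [c c_ge0 supergrad] :=
  concave_supergradient psi_concave psi_ndecr eps eps_gt0.
exists (fun x => (psi eps - c * eps)%:E + c%:E * cost x); split.
- apply: integrableD => //; first exact: finite_measure_integrable_cst.
  exact: integrableZl.
- rewrite integralD //; last exact: integrableZl.
    rewrite integral_cst // mu_setT mule1 integralZl //.
    apply: le_trans (leeD2l _ (lee_wpmul2l _ cost_le)) _; first by rewrite lee_fin.
    by rewrite -EFinM -EFinD lee_fin; lra.
  exact: finite_measure_integrable_cst.
apply: filterS (integrable_ae measurableT integrable_cost) => x /(_ I) cost_fin.
exists (fine (cost x)); first by rewrite fineK.
rewrite -(fineK cost_fin) /= -EFinM -EFinD lee_fin.
have := supergrad _ (fine_ge0 (cost_ge0 x)); lra.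
Qed.

End concave_majorant.

Section pker_probability.
Context {d d'} {X : measurableType d} {Y : measurableType d'} {R : realType}.
Variables (k : R.-pker X ~> Y) (x : X).

(* [k x] is an application, which cannot carry the [probability] instance that
   [prob_kernel] justifies; its named copy [pker_at k x] can. *)
Definition pker_at : set Y -> \bar R := k x.
HB.instance Definition _ := Measure.copy pker_at (k x).
HB.instance Definition _ :=
  Measure_isProbability.Build _ _ _ pker_at (@prob_kernel _ _ _ _ _ k x).

End pker_probability.

Section kernel_fst.
Context {d d' d'' : measure_display} {X : measurableType d}.
Context {Y : measurableType d'} {Z : measurableType d''} {R : realType}.
Variable k : R.-fker X ~> Z.

Definition kernel_fst : X * Y -> {measure set Z -> \bar R} := k \o fst.

Let measurable_kernel_fst U :
  measurable U -> measurable_fun setT (kernel_fst ^~ U).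
Proof. by move=> mU; exact: measurableT_comp (measurable_kernel k U mU) _. Qed.

HB.instance Definition _ :=
  isKernel.Build _ _ _ _ _ kernel_fst measurable_kernel_fst.

Let kernel_fst_uub : measure_fam_uub kernel_fst.
Proof. by have [r kr] := measure_uub k; exists r => -[x y]; exact: kr. Qed.

HB.instance Definition _ :=
  Kernel_isFinite.Build _ _ _ _ _ kernel_fst kernel_fst_uub.

End kernel_fst.

Section smoothed_hypothesis.
Context {dx dy} {X : measurableType dx} {Y : measurableType dy} {R : realType}.
Variables (S : R.-pker X ~> X) (h : X * Y -> R).
Hypotheses (mh : measurable_fun setT h) (h01 : forall p, (0 <= h p <= 1)%R).

Let mh_section y : measurable_fun setT (fun x => (h (x, y))%:E).
Proof. exact/measurable_EFinP/(measurable_fun_pair1 y mh). Qed.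

Let h_section01 y x : 0 <= (h (x, y))%:E <= 1.
Proof. by rewrite !lee_fin. Qed.

Lemma smoothed_itv01 p : 0 <= smoothed S h p <= 1.
Proof. exact: (integral_itv01 (pker_at S p.1) (mh_section p.2)). Qed.

Lemma measurable_smoothed : measurable_fun setT (smoothed S h).
Proof.
have mk : measurable_fun setT (fun q : X * Y * X => (h (q.2, q.1.2))%:E).
  apply/measurable_EFinP; apply: measurableT_comp mh _.
  exact: measurable_fun_pair measurable_snd
    (measurableT_comp measurable_snd measurable_fst).
have k0 (q : X * Y * X) : 0 <= (h (q.2, q.1.2))%:E.
  by case/andP: (h_section01 q.1.2 q.2).
exact: (measurable_fun_integral_finite_kernel _ (kernel_fst (Y:=Y) S) k0 mk).
Qed.

Lemma smoothed_sub_le_TV x1 x2 y :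
  `|smoothed S h (x1, y) - smoothed S h (x2, y)| <= TV (S x1) (S x2).
Proof.
exact: (abse_integral_sub_le_TV (pker_at S x1) (pker_at S x2) (mh_section y)).
Qed.

End smoothed_hypothesis.

Section label_cost.
Context {dx dy} {X : measurableType dx} {Y : measurableType dy} {R : realType}.
Context {dX : X -> X -> R}.

Lemma label_cost_ge0 : (forall x1 x2, (0 <= dX x1 x2)%R) ->
  forall p1 p2 : X * Y, 0 <= label_cost dX p1 p2.
Proof.
by move=> dX_ge0 p1 p2; rewrite /label_cost; case: asboolP; rewrite ?leey ?lee_fin.
Qed.

Lemma label_cost_EFin (p1 p2 : X * Y) r :
  label_cost dX p1 p2 = r%:E -> p1.2 = p2.2 /\ r = dX p1.1 p2.1.
Proof. by rewrite /label_cost; case: asboolP => // y12 [<-]. Qed.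

Lemma measurable_label_cost :
  measurable_fun setT (fun p : X * X => dX p.1 p.2) ->
  measurable [set p : Y * Y | p.1 = p.2] ->
  measurable_fun setT (fun t : (X * Y) * (X * Y) => label_cost dX t.1 t.2).
Proof.
move=> mdX mdiag; apply: measurable_fun_ifT; last exact: measurable_cst.
- apply: (measurable_fun_bool true); rewrite setTI.
  have -> : (fun t : (X * Y) * (X * Y) => `[< t.1.2 = t.2.2 >]) @^-1` [set true] =
      (fun t => (t.1.2, t.2.2)) @^-1` [set p | p.1 = p.2].
    by apply/seteqP; split => t /= /asboolP.
  rewrite -[X in measurable X]setTI.
  apply: measurable_fun_pair => //; apply: measurableT_comp => //.
- apply/measurable_EFinP; exact: measurableT_comp mdX
    (measurable_fun_pair (measurableT_comp measurable_fst measurable_fst)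
                         (measurableT_comp measurable_fst measurable_snd)).
Qed.

End label_cost.

Theorem theorem1 (R : realType) (dx dy : measure_display)
  (X : measurableType dx) (Y : measurableType dy)
  (dX : X -> X -> R)
  (dX_ge0 : forall x1 x2, (0 <= dX x1 x2)%R)
  (dX_meas : measurable_fun setT (fun p : X * X => dX p.1 p.2))
  (diagY_meas : measurable [set p : Y * Y | p.1 = p.2])
  (D Dt : probability (X * Y)%type R) (eps : R) (eps_ge0 : (0 <= eps)%R)
  (gam : probability ((X * Y) * (X * Y))%type R)
  (gam_marg1 : forall A, measurable A -> gam (A `*` setT) = D A)
  (gam_marg2 : forall A, measurable A -> gam (setT `*` A) = Dt A)
  (gam_cost : \int[gam]_t label_cost dX t.1 t.2 <= eps%:E)
  (S : R.-pker X ~> X)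
  (psi : R -> R)
  (psi_ndecr : forall a b, (0 <= a)%R -> (a <= b)%R -> (psi a <= psi b)%R)
  (psi_concave : forall a b t, (0 <= a)%R -> (0 <= b)%R -> (0 <= t <= 1)%R ->
      (t * psi a + (1 - t) * psi b <= psi (t * a + (1 - t) * b))%R)
  (S_TV : forall x1 x2, TV (S x1) (S x2) <= (psi (dX x1 x2))%:E)
  (h : X * Y -> R)
  (h_meas : measurable_fun setT h)
  (h_range : forall p, (0 <= h p <= 1)%R) :
  `| \int[D]_p smoothed S h p - \int[Dt]_p smoothed S h p | <= (psi eps)%:E.
Proof.
have hb01 := smoothed_itv01 S h h_meas h_range.
have hb_ge0 p : 0 <= smoothed S h p by case/andP: (hb01 p).
have mhb := measurable_smoothed S h h_meas h_range.
have [f [intf f_le f_maj]] := concave_integral_majorant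
  (measurable_label_cost dX_meas diagY_meas)
  (fun t => label_cost_ge0 dX_ge0 t.1 t.2) eps_ge0 gam_cost psi_ndecr psi_concave.
rewrite (integral_coupling_fst gam_marg1) // (integral_coupling_snd gam_marg2) //.
apply: le_trans f_le; apply: abse_integral_sub_le => //.
- exact: integrable_itv01 (measurableT_comp mhb measurable_fst) (fun t => hb01 t.1).
- exact: integrable_itv01 (measurableT_comp mhb measurable_snd) (fun t => hb01 t.2).
apply: filterS f_maj => -[[x1 y1] [x2 y2]].
move=> [r /label_cost_EFin /= [<- ->] psi_le].
apply: le_trans psi_le; apply: le_trans (S_TV x1 x2).
exact: smoothed_sub_le_TV.
Qed.
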